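(* Let $E$ be an exact Courant algebroid over $M$ with a generalized Riemannian metric $g_\tau$, and identify $T^*M$ with $\rho^*(T^*M)\subset E$. For real maximally isotropic subbundles $D,D'\subset E$ let $S,S'\in\Gamma(\mathrm{End}\,T^*M)$ be the unique endomorphisms such that $D_x=\{(1+\tau)\eta+(1-\tau)S\eta:\eta\in T^*_xM\}$ and $D'_x=\{(1+\tau)\eta+(1-\tau)S'\eta:\eta\in T^*_xM\}$ for all $x\in M$ (these operators are invertible). Then $D\cap D'=\{0\}$ if and only if $S^{-1}S'-1$ is nondegenerate (at every point).
   Context: A Courant algebroid is a vector bundle $E\to M$ with anchor $\rho\colon E\to TM$, bracket on $\Gamma(E)$ and nondegenerate symmetric fiber metric $(\cdot,\cdot)$ satisfying: $[\psi,f\psi']=f[\psi,\psi']+(\rho(\psi)f)\psi'$; $[\psi_1,[\psi_2,\psi_3]]=[[\psi_1,\psi_2],\psi_3]+[\psi_2,[\psi_1,\psi_3]]$; $\rho(\psi_1)(\psi_2,\psi_3)=([\psi_1,\psi_2],\psi_3)+(\psi_2,[\psi_1,\psi_3])$; $([\psi,\psi],\psi')=\tfrac12\rho(\psi')(\psi,\psi)$. With $\rho^*\colon T^*M\to E$ defined by $(\rho^*\alpha,\psi)=\langle\alpha,\rho(\psi)\rangle$, $E$ is exact if $0\to T^*M\to E\to TM\to 0$ is exact. A generalized Riemannian metric is a positive definite fiber metric $g_\tau(\psi_1,\psi_2)=(\tau\psi_1,\psi_2)$ with $\tau\in\Gamma(\mathrm{End}\,E)$, $\tau^2=1$. A subbundle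 is maximally isotropic if isotropic for $(\cdot,\cdot)$ and of maximal rank. *)

(* Fiberwise (pointwise) linear-algebra model of an exact
   Courant algebroid with a generalized Riemannian metric. *)
From HB Require Import structures.
From mathcomp Require Import all_boot all_order all_algebra.
Set Implicit Arguments. Unset Strict Implicit. Unset Printing Implicit Defensive.
Import Order.TTheory GRing.Theory Num.Theory.
Local Open Scope ring_scope.

(* The fiber E_x is 'rV[R]_m; T_xM and T*_xM are 'rV[R]_n, with the duality
   pairing <alpha, v> = alpha *m v^T.  Endomorphisms act on row vectors on the
   right: (A psi) is written psi *m A.  The fiber metric (.,.) has Gram
   matrix G. *)

Definition cform {R : realFieldType} {m : nat} (G : 'M[R]_m) (u v : 'rV[R]_m) : R :=
  (u *m G *m v^T) 0 0.

(* rho : E_x -> T_xM is psi |-> psi *m rho.  rho^* : T*_xM -> E_x is defined by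
   (rho^* alpha, psi) = <alpha, rho psi>, i.e. rho^* alpha = alpha rho^T G^{-1}. *)
Definition rho_star {R : realFieldType} {m n : nat} (G : 'M[R]_m) (rho : 'M[R]_(m, n))
  (alpha : 'rV[R]_n) : 'rV[R]_m := alpha *m rho^T *m invmx G.

Definition nondeg_sym_form {R : realFieldType} {m : nat} (G : 'M[R]_m) : Prop :=
  G^T = G /\ G \in unitmx.

(* exactness of 0 -> T*M --rho^*--> E --rho--> TM -> 0 at the fiber *)
Definition exact_fiber {R : realFieldType} {m n : nat} (G : 'M[R]_m) (rho : 'M[R]_(m, n)) : Prop :=
  [/\ (forall alpha : 'rV[R]_n, rho_star G rho alpha = 0 -> alpha = 0),
      (forall psi : 'rV[R]_m, psi *m rho = 0 <-> exists alpha, psi = rho_star G rho alpha)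
    & (forall w : 'rV[R]_n, exists psi : 'rV[R]_m, psi *m rho = w)].

(* generalized Riemannian metric g_tau(psi1,psi2) = (tau psi1, psi2),
   tau^2 = 1, g_tau a positive definite (symmetric) fiber metric *)
Definition gen_riem_metric {R : realFieldType} {m : nat} (G tau : 'M[R]_m) : Prop :=
  [/\ tau *m tau = 1%:M,
      (forall u v : 'rV[R]_m, cform G (u *m tau) v = cform G (v *m tau) u)
    & (forall u : 'rV[R]_m, u != 0 -> 0 < cform G (u *m tau) u)].

(* subspaces of the fiber are row spaces of square matrices (mxalgebra) *)
Definition isotropic {R : realFieldType} {m : nat} (G : 'M[R]_m) (D : 'M[R]_m) : Prop :=
  forall u v : 'rV[R]_m, (u <= D)%MS -> (v <= D)%MS -> cform G u v = 0.

Definition max_isotropic {R : realFieldType} {m : nat} (G : 'M[R]_m) (D : 'M[R]_m) : Prop :=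
  isotropic G D /\ (forall D' : 'M[R]_m, isotropic G D' -> (\rank D' <= \rank D)%N).

Definition graph_rep {R : realFieldType} {m n : nat} (G tau : 'M[R]_m) (rho : 'M[R]_(m, n))
  (S : 'M[R]_n) (D : 'M[R]_m) : Prop :=
  forall u : 'rV[R]_m, (u <= D)%MS <->
    exists eta : 'rV[R]_n,
      u = rho_star G rho eta *m (1%:M + tau) + rho_star G rho (eta *m S) *m (1%:M - tau).

(* Put P := 1 + tau and Q := 1 - tau.  Since tau^2 = 1, every vector splits
   uniquely as x P + y Q with (x P) tau = x P and (y Q) tau = - y Q.  The
   covectors rho^*(T*M) form an isotropic subspace (by exactness), and an
   isotropic eigenvector of tau is zero because g_tau is positive definite;
   hence eta |-> rho^* eta P and eta |-> rho^* eta Q are injective.  So a point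
   of D determines both eta and S eta, which makes S invertible (D is isotropic)
   and shows that D and D' meet exactly in the points with S eta = S' eta, i.e.
   with eta in the kernel of S' S^-1 - 1. *)
From HB Require Import structures.
From mathcomp Require Import all_boot all_order all_algebra.
Import Order.TTheory GRing.Theory Num.Theory.
Set Implicit Arguments. Unset Strict Implicit. Unset Printing Implicit Defensive.
Local Open Scope ring_scope.

Definition graph_point {R : realFieldType} {m n : nat} (G tau : 'M[R]_m)
  (rho : 'M[R]_(m, n)) (S : 'M[R]_n) (eta : 'rV[R]_n) : 'rV[R]_m :=
  rho_star G rho eta *m (1%:M + tau) + rho_star G rho (eta *m S) *m (1%:M - tau).

Lemma rho_starB (R : realFieldType) m n (G : 'M[R]_m) (rho : 'M[R]_(m, n)) a b :
  rho_star G rho (a - b) = rho_star G rho a - rho_star G rho b.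
Proof. by rewrite /rho_star !mulmxBl. Qed.

Lemma rho_star0 (R : realFieldType) m n (G : 'M[R]_m) (rho : 'M[R]_(m, n)) :
  rho_star G rho 0 = 0.
Proof. by rewrite /rho_star !mul0mx. Qed.

Lemma graph_point0 (R : realFieldType) m n (G tau : 'M[R]_m) (rho : 'M[R]_(m, n)) S :
  graph_point G tau rho S 0 = 0.
Proof. by rewrite /graph_point mul0mx rho_star0 !mul0mx addr0. Qed.

Section Involution.

Variables (R : numFieldType) (m : nat) (tau : 'M[R]_m).
Hypothesis tau2 : tau *m tau = 1%:M.

Lemma mul1Dtau_tau : (1%:M + tau) *m tau = 1%:M + tau.
Proof. by rewrite mulmxDl mul1mx tau2 addrC. Qed.

Lemma mul1Btau_tau : (1%:M - tau) *m tau = - (1%:M - tau).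
Proof. by rewrite mulmxBl mul1mx tau2 opprB. Qed.

Lemma eigen_split_eq0 (x y : 'rV[R]_m) :
  x *m (1%:M + tau) + y *m (1%:M - tau) = 0 ->
  x *m (1%:M + tau) = 0 /\ y *m (1%:M - tau) = 0.
Proof.
set p := x *m _; set q := y *m _ => pq0.
have : (p + q) *m tau = p - q.
  by rewrite mulmxDl -!mulmxA mul1Dtau_tau mul1Btau_tau mulmxN.
rewrite pq0 mul0mx => /esym/eqP; rewrite subr_eq0 => /eqP qp.
have pp0 : (2%:R : R) *: p = 0 by rewrite scaler_nat mulr2n {2}qp.
move/eqP: pp0; rewrite scaler_eq0 pnatr_eq0 /= => /eqP p0.
by split=> //; rewrite -qp.
Qed.

End Involution.

Lemma mulmx_mulinvmx_sub1_eq0 (R : comUnitRingType) n (S S' : 'M[R]_n) (e : 'rV[R]_n) :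
  S \in unitmx -> (e *m (S' *m invmx S - 1%:M) == 0) = (e *m S' == e *m S).
Proof.
move=> Su; rewrite mulmxBr mulmx1 subr_eq0 mulmxA.
by apply/eqP/eqP => [eS | ->]; [rewrite -[in RHS]eS mulmxKV | rewrite mulmxK].
Qed.

Lemma nonunitmx_ker (F : fieldType) n (A : 'M[F]_n) :
  A \notin unitmx -> exists2 v : 'rV_n, v != 0 & v *m A = 0.
Proof. by rewrite unitmxE unitfE negbK => /det0P. Qed.

Section Fiber.

Context {R : realFieldType} {m n : nat} {G tau : 'M[R]_m} {rho : 'M[R]_(m, n)}.
Hypotheses (Gu : G \in unitmx) (ef : exact_fiber G rho) (gr : gen_riem_metric G tau).

Let tau2 : tau *m tau = 1%:M. Proof. by case: gr. Qed.

Lemma cform_rho_star a b : cform G (rho_star G rho a) (rho_star G rho b) = 0.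
Proof.
have [_ kerP _] := ef.
have rb : rho_star G rho b *m rho = 0 by apply/kerP; exists b.
by rewrite /cform {1}/rho_star mulmxKV // -mulmxA -trmx_mul rb trmx0 mulmx0 mxE.
Qed.

Lemma tau_eigen_isotropic_eq0 u :
  u *m tau = u \/ u *m tau = - u -> cform G u u = 0 -> u = 0.
Proof.
have [_ _ pos] := gr.
move=> eig iso; apply/eqP/negPn/negP => /pos.
case: eig => ->; last rewrite /cform !mulNmx mxE -/(cform G u u).
all: by rewrite iso ?oppr0 ltxx.
Qed.

Lemma rho_star_mul1Dtau_eq0 w : rho_star G rho w *m (1%:M + tau) = 0 -> w = 0.
Proof.
have [inj _ _] := ef; move=> h; apply: inj.
apply: tau_eigen_isotropic_eq0; last exact: cform_rho_star.
by right; apply/eqP; rewrite -addr_eq0 addrC -{1}[rho_star _ _ _]mulmx1 -mulmxDr h.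
Qed.

Lemma rho_star_mul1Btau_eq0 w : rho_star G rho w *m (1%:M - tau) = 0 -> w = 0.
Proof.
have [inj _ _] := ef; move=> h; apply: inj.
apply: tau_eigen_isotropic_eq0; last exact: cform_rho_star.
by left; apply/eqP; rewrite eq_sym -subr_eq0 -{1}[rho_star _ _ _]mulmx1 -mulmxBr h.
Qed.

Lemma graph_point_inj S S' e e' :
  graph_point G tau rho S e = graph_point G tau rho S' e' ->
  e = e' /\ e *m S = e' *m S'.
Proof.
move/eqP; rewrite -subr_eq0 => /eqP gp0.
have : rho_star G rho (e - e') *m (1%:M + tau) +
       rho_star G rho (e *m S - e' *m S') *m (1%:M - tau) = 0.
  by rewrite -gp0 /graph_point !rho_starB !mulmxBl opprD addrACA.
case/eigen_split_eq0 => // /rho_star_mul1Dtau_eq0/eqP + /rho_star_mul1Btau_eq0/eqP.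
by rewrite !subr_eq0 => /eqP-> /eqP->.
Qed.

Lemma graph_rep_unitmx {S D} :
  isotropic G D -> graph_rep G tau rho S D -> S \in unitmx.
Proof.
move=> isoD rD; apply/negPn/negP => /nonunitmx_ker [w /negP w0 wS0]; apply: w0.
set u := rho_star G rho w *m (1%:M + tau).
have uD : (u <= D)%MS.
  by apply/rD; exists w; rewrite wS0 rho_star0 mul0mx addr0.
have uT : u *m tau = u by rewrite -mulmxA mul1Dtau_tau.
apply/eqP/rho_star_mul1Dtau_eq0; rewrite -/u.
exact: (tau_eigen_isotropic_eq0 (or_introl uT) (isoD u u uD uD)).
Qed.

End Fiber.

Theorem mainTheorem12 (R : realFieldType) (m n : nat)
  (G tau : 'M[R]_m) (rho : 'M[R]_(m, n)) (D D' : 'M[R]_m) (S S' : 'M[R]_n) :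
  nondeg_sym_form G ->
  exact_fiber G rho ->
  gen_riem_metric G tau ->
  max_isotropic G D -> max_isotropic G D' ->
  graph_rep G tau rho S D -> graph_rep G tau rho S' D' ->
  [/\ S \in unitmx, S' \in unitmx &
      ((forall u : 'rV[R]_m, (u <= D)%MS -> (u <= D')%MS -> u = 0) <->
       (S' *m invmx S - 1%:M) \in unitmx)].
Proof.
move=> [_ Gu] ef gr [isoD _] [isoD' _] rD rD'.
have Su := graph_rep_unitmx Gu ef gr isoD rD.
have Su' := graph_rep_unitmx Gu ef gr isoD' rD'.
split=> //; split=> [disj | Mu u].
  apply/negPn/negP => /nonunitmx_ker [w /negP w0 /eqP].
  rewrite mulmx_mulinvmx_sub1_eq0 // => /eqP wS; apply: w0; apply/eqP.
  have gD : (graph_point G tau rho S w <= D)%MS by apply/rD; exists w.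
  have gD' : (graph_point G tau rho S w <= D')%MS by apply/rD'; exists w; rewrite /graph_point wS.
  have := disj _ gD gD'; rewrite -(graph_point0 G tau rho S).
  by case/(graph_point_inj Gu ef gr).
case/rD => e ->; case/rD' => e' /(graph_point_inj Gu ef gr) [<- eS].
have /eqP e0 : e *m (S' *m invmx S - 1%:M) == 0 by rewrite mulmx_mulinvmx_sub1_eq0 ?eS.
by rewrite -(mulmxK Mu e) e0 mul0mx; apply: graph_point0.
Qed.
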